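(* Let $f:\mathbb{Z}^n\to\mathbb{R}\cup\{+\infty\}$ be a function satisfying condition (SSQM$^\natural$) with $\arg\min f\neq\emptyset$, and let $x\in\mathrm{dom}\,f$ with $x\notin\arg\min f$. Let $(i,j)$ be a pair of distinct elements of $N\cup\{0\}$ minimizing the value $f(x-\chi_i+\chi_j)$. Then there exists a minimizer $x^*$ of $f$ satisfying: - if $i,j\in N$: $x^*(i)\le x(i)-1$ and $x^*(j)\ge x(j)+1$; - if $i\in N$ and $j=0$: $x^*(i)\le x(i)-1$; - if $i=0$ and $j\in N$: $x^*(j)\ge x(j)+1$.
   Context: $N=\{1,\dots,n\}$. For $i\in N$, $\chi_i\in\{0,1\}^n$ is the characteristic vector of $i$, and $\chi_0=0$. $\mathrm{dom}\,f=\{x\in\mathbb{Z}^n\mid f(x)<+\infty\}$. For $x,y\in\mathbb{Z}^n$, $\mathrm{supp}^+(x-y)=\{i\in N\mid x(i)>y(i)\}$ and $\mathrm{supp}^-(x-y)=\{j\in N\mid x(j)<y(j)\}$. Condition (SSQM$^\natural$): for all $x,y\in\mathrm{dom}\,f$ and all $i\in\mathrm{supp}^+(x-y)$ there exists $j\in\mathrm{supp}^-(x-y)\cup\{0\}$ such that at least one of the following holds: (a) $f(x-\chi_i+\chi_j)<f(x)$; (b) $f(y+\chi_i-\chi_j)<f(y)$; (c) $f(x-\chi_i+\chi_j)=f(x)$ and $f(y+\chi_i-\chi_j)=f(y)$. *)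

From HB Require Import structures.
From mathcomp Require Import all_boot all_order all_algebra.
From mathcomp Require Import reals constructive_ereal.
Set Implicit Arguments. Unset Strict Implicit. Unset Printing Implicit Defensive.
Import Order.TTheory GRing.Theory Num.Theory.
Local Open Scope ring_scope.
Local Open Scope ereal_scope.

(* Points of Z^n are functions 'I_n -> int.  The index set N ∪ {0} is
   option 'I_n, with None standing for the index 0. *)
Definition zvec (n : nat) := 'I_n -> int.

Definition chi (n : nat) (i : option 'I_n) : zvec n :=
  fun k => match i with Some i0 => ((k == i0) : nat)%:Z | None => 0%R end.

Definition exch (n : nat) (x : zvec n) (i j : option 'I_n) : zvec n :=
  fun k => (x k - chi i k + chi j k)%R.

Definition exch' (n : nat) (y : zvec n) (i j : option 'I_n) : zvec n :=
  fun k => (y k + chi i k - chi j k)%R.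

Definition in_dom (R : realDomainType) (n : nat) (f : zvec n -> \bar R) (x : zvec n) :=
  f x < +oo.

Definition SSQMnat (R : realDomainType) (n : nat) (f : zvec n -> \bar R) : Prop :=
  forall x y : zvec n, in_dom f x -> in_dom f y ->
  forall i : 'I_n, (y i < x i)%R ->
  exists j : option 'I_n,
    (match j with None => true | Some j0 => (x j0 < y j0)%R end) /\
    [\/ f (exch x (Some i) j) < f x,
        f (exch' y (Some i) j) < f y
      | f (exch x (Some i) j) = f x /\ f (exch' y (Some i) j) = f y].

Definition is_argmin (R : realDomainType) (n : nat) (f : zvec n -> \bar R) (x : zvec n) :=
  in_dom f x /\ forall y, f x <= f y.

From HB Require Import structures.
From mathcomp Require Import all_boot all_order all_algebra.
From mathcomp Require Import reals constructive_ereal.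
From mathcomp Require Import zify.
From Stdlib Require Import Classical FunctionalExtensionality.
Set Implicit Arguments. Unset Strict Implicit. Unset Printing Implicit Defensive.
Import Order.TTheory GRing.Theory Num.Theory.
Local Open Scope ring_scope.
Local Open Scope ereal_scope.

(* Take a minimizer z of f as close as possible to x in the l1 distance.  At a
   coordinate k where z and x differ, (SSQM^natural) applied to z and x offers
   an exchange step; option (a) contradicts the minimality of f z, and option
   (c) gives a minimizer closer to x, so option (b) holds: some exchange step
   from x strictly decreases f.  Hence x - chi_i + chi_j, the best step from
   x, satisfies f(x - chi_i + chi_j) < f x.  Repeating the argument with a
   minimizer z closest to y := x - chi_i + chi_j: if z(i) > y(i), the step
   from y produced above has the form x - chi_l + chi_j, whose value is at
   least f y by the choice of (i, j); so z(i) <= x(i) - 1, and symmetrically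
   z(j) >= x(j) + 1. *)

Lemma ex_min_measure (T : Type) (P : T -> Prop) (d : T -> nat) :
  (exists z, P z) -> exists z, P z /\ forall w, P w -> (d z <= d w)%N.
Proof.
move=> [z0 Pz0]; apply: NNPP => nomin.
suff notP m w : (d w < m)%N -> ~ P w by exact: notP (d z0).+1 z0 (ltnSn _) Pz0.
elim: m w => [//|m IHm] w dw Pw; apply: nomin; exists w; split => // w' Pw'.
by rewrite leqNgt; apply/negP => lt_w'w; apply: (IHm w') Pw'; lia.
Qed.

Section Exchange.
Variable n : nat.
Implicit Types (x z t : zvec n) (a b : option 'I_n).

Lemma chiP a (m : 'I_n) : chi a m = 0%R \/ a = Some m /\ chi a m = 1%R.
Proof. by rewrite /chi; case: a => [a0|]; [case: eqP => [->|]|]; auto. Qed.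

Lemma chi_Some (k : 'I_n) : chi (Some k) k = 1%R.
Proof. by rewrite /chi eqxx. Qed.

Lemma exch_at_src x (k : 'I_n) b : b != Some k -> exch x (Some k) b k = (x k - 1)%R.
Proof. by rewrite /exch chi_Some; case: (chiP b k) => [->|[-> _]]; [lia|rewrite eqxx]. Qed.

Lemma exch_at_dst x a (k : 'I_n) : a != Some k -> exch x a (Some k) k = (x k + 1)%R.
Proof. by rewrite /exch chi_Some; case: (chiP a k) => [->|[-> _]]; [lia|rewrite eqxx]. Qed.

Lemma exchxx x a : exch x a a = x.
Proof. by apply: functional_extensionality => m; rewrite /exch; lia. Qed.

Lemma exch'E x a b : exch' x a b = exch x b a.
Proof. by apply: functional_extensionality => m; rewrite /exch /exch'; lia. Qed.

Lemma exch_exch_src x a b c : exch (exch x a b) c a = exch x c b.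
Proof. by apply: functional_extensionality => m; rewrite /exch; lia. Qed.

Lemma exch_exch_dst x a b c : exch (exch x a b) b c = exch x a c.
Proof. by apply: functional_extensionality => m; rewrite /exch; lia. Qed.

Definition l1_dist x t : nat := (\sum_(k < n) `|x k - t k|)%N.

Lemma l1_dist_exch z t a b (k : 'I_n) :
  (forall a0 : 'I_n, a = Some a0 -> (t a0 < z a0)%R) ->
  (forall b0 : 'I_n, b = Some b0 -> (z b0 < t b0)%R) ->
  a = Some k \/ b = Some k ->
  (l1_dist (exch z a b) t < l1_dist z t)%N.
Proof.
move=> ha hb hk.
have ca m : chi a m = 0%R \/ chi a m = 1%R /\ (t m < z m)%R.
  by case: (chiP a m) => [|[/ha]]; auto.
have cb m : chi b m = 0%R \/ chi b m = 1%R /\ (z m < t m)%R.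
  by case: (chiP b m) => [|[/hb]]; auto.
have le_m m : (`|exch z a b m - t m| <= `|z m - t m|)%N.
  by rewrite /exch; case: (ca m) => [|[]]; case: (cb m) => [|[]]; lia.
have lt_k : (`|exch z a b k - t k| < `|z k - t k|)%N.
  have hk1 : chi a k = 1%R \/ chi b k = 1%R by case: hk => ->; rewrite chi_Some; auto.
  by rewrite /exch; case: (ca k) => [|[]]; case: (cb k) => [|[]]; lia.
rewrite /l1_dist (bigD1 k) //= [X in (_ < X)%N](bigD1 k) //=.
rewrite -addSn leq_add //; exact: leq_sum.
Qed.

End Exchange.

Section ClosestMinimizer.
Variables (R : realDomainType) (n : nat) (f : zvec n -> \bar R).
Hypothesis hf : SSQMnat f.
Implicit Types (x z t w : zvec n).

Definition closest_argmin t z :=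
  is_argmin f z /\ forall w, is_argmin f w -> (l1_dist z t <= l1_dist w t)%N.

Lemma ex_closest_argmin t : (exists z, is_argmin f z) -> exists z, closest_argmin t z.
Proof. exact: ex_min_measure. Qed.

Lemma argmin_nlt z w : is_argmin f z -> ~ f w < f z.
Proof. by move=> [_ zmin]; rewrite ltNge zmin. Qed.

Lemma closest_argmin_no_closer t z w :
  closest_argmin t z -> f w = f z -> ~ (l1_dist w t < l1_dist z t)%N.
Proof.
move=> [[zd zmin] zcl] fwz; rewrite ltnNge (zcl w) //.
by split=> [|v]; rewrite ?/in_dom fwz.
Qed.

Lemma Some_side (P : 'I_n -> Prop) (l : option 'I_n) :
  match l with Some l0 => P l0 | None => is_true true end ->
  forall l0, l = Some l0 -> P l0.
Proof. by case: l => // l0 Pl0 _ [<-]. Qed.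

Lemma closest_argmin_step_up t z (k : 'I_n) :
  in_dom f t -> closest_argmin t z -> (t k < z k)%R ->
  exists l, f (exch t l (Some k)) < f t.
Proof.
move=> td zc lt_tz; have [l [/Some_side hl]] := hf zc.1.1 td lt_tz.
case=> [lt_z | lt_t | [eq_z _]].
- by case: (argmin_nlt zc.1 lt_z).
- by exists l; rewrite -exch'E.
- case: (closest_argmin_no_closer zc eq_z).
  by apply: l1_dist_exch; [move=> _ [<-] | exact: hl | left].
Qed.

Lemma closest_argmin_step_down t z (k : 'I_n) :
  in_dom f t -> closest_argmin t z -> (z k < t k)%R ->
  exists l, f (exch t (Some k) l) < f t.
Proof.
move=> td zc lt_zt; have [l [/Some_side hl]] := hf td zc.1.1 lt_zt.
case=> [lt_t | lt_z | [_ eq_z]].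
- by exists l.
- by case: (argmin_nlt zc.1 lt_z).
- case: (closest_argmin_no_closer zc eq_z); rewrite exch'E.
  by apply: l1_dist_exch; [exact: hl | move=> _ [<-] | right].
Qed.

Lemma ex_improving_exch x :
  in_dom f x -> ~ is_argmin f x -> (exists z, is_argmin f z) ->
  exists a b, f (exch x a b) < f x.
Proof.
move=> xd xnot /(ex_closest_argmin x) [z zc].
have [k neq_k] : exists k, x k != z k.
  apply: NNPP => same; apply: xnot; suff -> : x = z by exact: zc.1.
  apply: functional_extensionality => k; apply/eqP/negP => ne.
  by apply: same; exists k; apply/negP.
case: (ltgtP (x k) (z k)) => [lt_xz | lt_zx | eq_xz].
- by have [l] := closest_argmin_step_up xd zc lt_xz; exists l, (Some k).
- by have [l] := closest_argmin_step_down xd zc lt_zx; exists (Some k), l.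
- by rewrite eq_xz eqxx in neq_k.
Qed.

End ClosestMinimizer.

Lemma exch_lt_neq (R : realDomainType) n (f : zvec n -> \bar R) x a b :
  f (exch x a b) < f x -> a != b.
Proof. by apply: contraTneq => ->; rewrite exchxx ltxx. Qed.

Theorem theorem2p9 (R : realType) (n : nat) (f : zvec n -> \bar R)
  (f_noninf : forall z, f z != -oo)
  (hf : SSQMnat f)
  (hmin : exists z, is_argmin f z)
  (x : zvec n) (hx : in_dom f x) (hxnot : ~ is_argmin f x)
  (i j : option 'I_n) (hij : i != j)
  (hbest : forall i' j' : option 'I_n, i' != j' ->
      f (exch x i j) <= f (exch x i' j')) :
  exists xs : zvec n, is_argmin f xs /\
    (forall i0 : 'I_n, i = Some i0 -> (xs i0 <= x i0 - 1)%R) /\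
    (forall j0 : 'I_n, j = Some j0 -> (x j0 + 1 <= xs j0)%R).
Proof.
have [a [b lt_ab]] := ex_improving_exch hf hx hxnot hmin.
have lt_yx : f (exch x i j) < f x := le_lt_trans (hbest a b (exch_lt_neq lt_ab)) lt_ab.
have best a' b' : f (exch x i j) <= f (exch x a' b').
  by case: (eqVneq a' b') => [->|/hbest //]; rewrite exchxx ltW.
have yd : in_dom f (exch x i j) := lt_trans lt_yx hx.
have [z zc] := ex_closest_argmin (exch x i j) hmin.
exists z; split; first exact: zc.1.
split=> [i0 ei | j0 ej].
- have y_i0 : exch x i j i0 = (x i0 - 1)%R by rewrite ei exch_at_src // -ei eq_sym.
  rewrite -y_i0 leNgt; apply/negP => lt_yz.
  have [l] := closest_argmin_step_up hf yd zc lt_yz.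
  by rewrite -ei exch_exch_src ltNge best.
- have y_j0 : exch x i j j0 = (x j0 + 1)%R by rewrite ej exch_at_dst // -ej.
  rewrite -y_j0 leNgt; apply/negP => lt_zy.
  have [l] := closest_argmin_step_down hf yd zc lt_zy.
  by rewrite -ej exch_exch_dst ltNge best.
Qed.
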